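(* (1) (Modified LU decomposition) If $A$ is a complex $m\times m$ matrix with $\det(A^{(k)})\ne0$ for $k=1,\dots,m$ and $\det(\hat A^{(k)})\ne0$ for $k=1,\dots,m-1$, then there exist a unique lower triangular matrix $B$ and a unique upper triangular matrix $C$ with first diagonal entry $1$ and remaining first-row entries $0$ such that $A=B\cdot K\cdot C$, where $K$ is the $m\times m$ matrix with entries $1$ on the diagonal and on the superdiagonal and $0$ elsewhere. (2) (Modified Cholesky factorization for $(m-1)\times m$ matrices) If $A$ is a complex $(m-1)\times m$ matrix with $\det(A^{(k)})\ne0$ for $k=1,\dots,m-1$ and $\det(\hat A^{(k)})\ne0$ for $k=1,\dots,m-1$, then there exist a unique $(m-1)\times(m-1)$ lower triangular matrix $B$ and a unique $m\times m$ upper triangular matrix $C$ with first diagonal entry $1$ and remaining first-row entries $0$ such that $A=B\cdot K'\cdot C$, where $K'$ is the $(m-1)\times m$ matrix with entries $1$ in positions $(i,i)$ and $(i,i+1)$ for $i=1,\dots,m-1$ and $0$ elsewhere.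
   Context: For a matrix $A$, $A^{(k)}$ denotes its upper left $k\times k$ submatrix; $\hat A$ denotes the matrix obtained from $A$ by deleting its first column, and $\hat A^{(k)}$ the upper left $k\times k$ submatrix of $\hat A$. *)

From Stdlib Require Rdefinitions.
From HB Require Import structures.
From mathcomp Require Import all_boot all_order all_algebra.
From mathcomp Require Import complex.
From mathcomp Require Import Rstruct.
Set Implicit Arguments. Unset Strict Implicit. Unset Printing Implicit Defensive.
Import Order.TTheory GRing.Theory Num.Theory.
Local Open Scope ring_scope.

Definition CC : fieldType := (Rdefinitions.R)[i].

Definition ulsub (F : Type) (r c k : nat) (hr : (k <= r)%N) (hc : (k <= c)%N)
  (A : 'M[F]_(r, c)) : 'M[F]_k :=
  \matrix_(i < k, j < k) A (widen_ord hr i) (widen_ord hc j).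

Definition delcol1 (F : Type) (r c : nat) (A : 'M[F]_(r, c.+1)) : 'M[F]_(r, c) :=
  \matrix_(i < r, j < c) A i (lift ord0 j).

Definition lower_tri (F : nmodType) (r c : nat) (B : 'M[F]_(r, c)) : Prop :=
  forall (i : 'I_r) (j : 'I_c), (i < j)%N -> B i j = 0.

Definition upper_tri (F : nmodType) (r c : nat) (C : 'M[F]_(r, c)) : Prop :=
  forall (i : 'I_r) (j : 'I_c), (j < i)%N -> C i j = 0.

Definition first_row_e1 (F : pzSemiRingType) (n : nat) (C : 'M[F]_n.+1) : Prop :=
  C ord0 ord0 = 1 /\ forall j : 'I_n.+1, j != ord0 -> C ord0 j = 0.

(* K (square, r = c = m) and K' (r = m-1, c = m): ones at (i,i) and (i,i+1). *)
Definition Kmx (F : pzSemiRingType) (r c : nat) : 'M[F]_(r, c) :=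
  \matrix_(i < r, j < c) (((j : nat) == i) || ((j : nat) == i.+1))%:R.

(* Write A = B U with U = K C.  For C upper triangular with first row e_0, the
   matrix K C is upper triangular and the alternating sum of its rows,
   sum_k (-1)^k (K C)_k, agrees with e_0 on the first r columns (r = number of
   rows of A); conversely every upper triangular U with this property is K C
   for a unique such C.  So the statement is about LU factorisations A = B U
   whose upper factor satisfies one extra linear condition.  Nonzero leading
   minors give A = X^-1 U_X with X unit lower triangular, and every LU
   factorisation is A = (D X)^-1 (D U_X) with D invertible diagonal.  The
   condition forces D = diag((-1)^k w_k), where w = e_0 U_0^-1 and U_0 is the
   leading block of U_X; the minors of \hat A are exactly what makes every w_k
   nonzero. *)

From HB Require Import structures.
From mathcomp Require Import all_boot all_order all_algebra.
From mathcomp Require Import zify ring.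
Set Implicit Arguments. Unset Strict Implicit. Unset Printing Implicit Defensive.
Import GRing.Theory.
Local Open Scope ring_scope.

Section Triangular.
Variable F : fieldType.

Lemma upper_tri_trmx r c (M : 'M[F]_(r, c)) : upper_tri M <-> lower_tri M^T.
Proof. by split=> h i j hij; [rewrite mxE h | have := h j i hij; rewrite mxE]. Qed.

Lemma lower_tri_mul a b c (L : 'M[F]_(a, b)) (M : 'M[F]_(b, c)) :
  lower_tri L -> lower_tri M -> lower_tri (L *m M).
Proof.
move=> hL hM i j hij; rewrite mxE big1 // => l _.
case: (ltnP i l) => h; first by rewrite hL // mul0r.
by rewrite hM ?mulr0 // (leq_ltn_trans h hij).
Qed.

Lemma upper_tri_mul a b c (L : 'M[F]_(a, b)) (M : 'M[F]_(b, c)) :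
  upper_tri L -> upper_tri M -> upper_tri (L *m M).
Proof. by rewrite !upper_tri_trmx trmx_mul => hL hM; apply: lower_tri_mul. Qed.

Lemma det_lower_tri n (M : 'M[F]_n) : lower_tri M -> \det M = \prod_(i < n) M i i.
Proof. by move=> /is_trig_mxP; apply: det_trig. Qed.

(* Descending induction on [j]: entry [(i, j)] of [invmx X *m X = 1] expresses
   [invmx X i j * X j j] through the entries [invmx X i l] with [j < l]. *)
Lemma lower_tri_inv n (X : 'M[F]_n) :
  lower_tri X -> X \in unitmx -> lower_tri (invmx X).
Proof.
move=> lowX unitX i j.
have [k] := ubnP (n - j); elim: k j => // k IH j hk hij.
have Xjj : X j j != 0.
  by move: unitX; rewrite unitmxE unitfE det_lower_tri // => /prodf_neq0; apply.
have /eqP := congr1 (fun M : 'M[F]_n => M i j) (mulVmx unitX).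
rewrite !mxE (bigD1 j) //= big1 ?addr0; last first.
  move=> l hl; case: (ltnP l j) => hlj; first by rewrite lowX ?mulr0.
  have hjl : (j < l)%N by rewrite ltn_neqAle hlj andbT eq_sym val_eqE.
  by rewrite IH ?mul0r ?(ltn_trans hij) //; have := ltn_ord l; lia.
by rewrite -val_eqE (ltn_eqF hij) mulf_eq0 (negPf Xjj) orbF => /eqP.
Qed.

Lemma upper_tri_inv n (X : 'M[F]_n) :
  upper_tri X -> X \in unitmx -> upper_tri (invmx X).
Proof.
rewrite !upper_tri_trmx trmx_inv -unitmx_tr; exact: lower_tri_inv.
Qed.

End Triangular.

Section KmxProducts.
Variable F : fieldType.

Definition e0row m : 'rV[F]_m := \row_j ((j : nat) == 0)%:R.
Definition altrow m : 'rV[F]_m := \row_k (-1) ^+ k.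

Lemma sum_indicator N p (f : nat -> F) :
  \sum_(l < N) ((l : nat) == p)%:R * f l = (p < N)%:R * f p.
Proof.
case: ltnP => hp; last first.
  by rewrite mul0r big1 // => l _; rewrite ltn_eqF ?mul0r // (leq_trans _ hp).
rewrite (bigD1 (Ordinal hp)) //= eqxx big1 ?addr0 // => l hl.
by rewrite (_ : _ == _ = false) ?mul0r //; apply: contraNF hl => /eqP e; apply/eqP/val_inj.
Qed.

Lemma Kmx_entry r c (i : 'I_r) (j : 'I_c) :
  Kmx F r c i j = ((j : nat) == i)%:R + ((j : nat) == i.+1)%:R.
Proof.
rewrite mxE; have [->|_] := eqVneq (j : nat) i; last by rewrite add0r.
by rewrite (ltn_eqF (ltnSn i)) addr0.
Qed.

Lemma Kmx_upper r c : upper_tri (Kmx F r c).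
Proof. by move=> i j hji; rewrite Kmx_entry (ltn_eqF hji) (ltn_eqF (leqW hji)) addr0. Qed.

Lemma mulKmxE r n c (hrn : (r <= n.+1)%N) (E : 'M[F]_(n.+1, c)) i j :
  (Kmx F r n.+1 *m E) i j = E (inord i) j + (i.+1 < n.+1)%:R * E (inord i.+1) j.
Proof.
rewrite mxE; under eq_bigr => l _ do rewrite Kmx_entry mulrDl -[l in E l j]inord_val.
rewrite big_split /= !(sum_indicator _ _ (fun l => E (inord l) j)).
by rewrite (leq_trans (ltn_ord i) hrn) mul1r.
Qed.

Lemma altrow_mulKmx r n (l : 'I_n.+1) :
  (l < r)%N -> (altrow r *m Kmx F r n.+1) 0 l = ((l : nat) == 0)%:R.
Proof.
move=> hl; rewrite mxE.
under eq_bigr => k _ do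
  rewrite Kmx_entry mxE mulrDr ![(-1) ^+ k * _]mulrC !(eq_sym (l : nat)).
rewrite big_split /= (sum_indicator _ _ (fun k => (-1) ^+ k)) hl mul1r.
case: l hl => [[|l] hl] /= hlr.
  by rewrite expr0 big1 ?addr0 // => k _; rewrite mul0r.
under eq_bigr do rewrite eqSS.
rewrite (sum_indicator _ _ (fun k => (-1) ^+ k)) (ltnW hlr) mul1r.
by rewrite exprS mulN1r addNr.
Qed.

End KmxProducts.

Section LeadingBlocks.
Variable F : fieldType.

Lemma sum_ord_indicator N (i : 'I_N) (f : 'I_N -> F) :
  \sum_(l < N) (l == i)%:R * f l = f i.
Proof.
rewrite (bigD1 i) //= eqxx mul1r big1 ?addr0 // => l hl.
by rewrite (negPf hl) mul0r.
Qed.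

Lemma sum_ord_narrow p k (hk : (k <= p)%N) (f : 'I_p -> F) :
  (forall l : 'I_p, (k <= l)%N -> f l = 0) ->
  \sum_(l < p) f l = \sum_(l < k) f (widen_ord hk l).
Proof.
move=> f0; rewrite (bigID (fun l : 'I_p => (l < k)%N)) /= [X in _ + X]big1 ?addr0.
  exact: big_ord_narrow.
by move=> l; rewrite -leqNgt; apply: f0.
Qed.

Lemma ulsub_colsub r c (hr : (r <= r)%N) (hc : (r <= c)%N) (A : 'M[F]_(r, c)) :
  ulsub hr hc A = colsub (widen_ord hc) A.
Proof. by apply/matrixP => i j; rewrite !mxE; congr (A _ _); apply/val_inj. Qed.

Lemma ulsub_lower_mulmx r c k (hr : (k <= r)%N) (hc : (k <= c)%N)
    (X : 'M[F]_r) (A : 'M[F]_(r, c)) :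
  lower_tri X -> ulsub hr hc (X *m A) = ulsub hr hr X *m ulsub hr hc A.
Proof.
move=> lowX; apply/matrixP => i j; rewrite !mxE (sum_ord_narrow hr).
  by apply: eq_bigr => l _; rewrite !mxE.
by move=> l hkl; rewrite lowX ?mul0r // (leq_trans (ltn_ord i) hkl).
Qed.

Lemma delcol1_mulmx a b c (X : 'M[F]_(a, b)) (A : 'M[F]_(b, c.+1)) :
  delcol1 (X *m A) = X *m delcol1 A.
Proof. by apply/matrixP => i j; rewrite !mxE; apply: eq_bigr => l _; rewrite mxE. Qed.

Lemma det_ulsub_unitrig_mulmx r c k (hr : (k <= r)%N) (hc : (k <= c)%N)
    (X : 'M[F]_r) (A : 'M[F]_(r, c)) :
  lower_tri X -> (forall i, X i i = 1) ->
  \det (ulsub hr hc (X *m A)) = \det (ulsub hr hc A).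
Proof.
move=> lowX X1; rewrite ulsub_lower_mulmx // det_mulmx (det_lower_tri (M := ulsub hr hr X)).
  by rewrite big1 ?mul1r // => i _; rewrite mxE X1.
by move=> i j hij; rewrite mxE lowX.
Qed.

Lemma leading_minors_neq0 r c (A : 'M[F]_(r, c)) :
  (forall k (hr : (k <= r)%N) (hc : (k <= c)%N), (0 < k)%N -> \det (ulsub hr hc A) != 0) ->
  forall k (hr : (k <= r)%N) (hc : (k <= c)%N), \det (ulsub hr hc A) != 0.
Proof. by move=> hA [|k] hr hc; [rewrite det_mx00 oner_eq0 | apply: hA]. Qed.

(* Row [i] of [X] is [(-a_i A_i^-1, 1, 0, ..., 0)], where [A_i] is the leading
   [i x i] block of [A] and [a_i] the first [i] entries of its row [i]. *)
Lemma unitrig_reduction r c (hrc : (r <= c)%N) (A : 'M[F]_(r, c)) :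
  (forall k (hr : (k <= r)%N) (hc : (k <= c)%N), \det (ulsub hr hc A) != 0) ->
  exists X : 'M[F]_r, [/\ lower_tri X, (forall i, X i i = 1) & upper_tri (X *m A)].
Proof.
move=> hA.
pose hri (i : 'I_r) := ltnW (ltn_ord i).
pose hci (i : 'I_r) := ltnW (leq_trans (ltn_ord i) hrc).
pose Ai (i : 'I_r) := ulsub (hri i) (hci i) A.
pose ai (i : 'I_r) : 'rV[F]_i := \row_(l < i) A i (widen_ord (hci i) l).
pose v (i : 'I_r) := - (ai i *m invmx (Ai i)).
pose X := \matrix_(i < r, l < r)
   (\sum_(l' < i) (l == widen_ord (hri i) l')%:R * v i 0 l' + (l == i)%:R).
have XE (i l : 'I_r) : (i <= l)%N -> X i l = (l == i)%:R.
  move=> hil; rewrite mxE big1 ?add0r // => l' _.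
  by rewrite (_ : _ == _ = false) ?mul0r // -val_eqE /= gtn_eqF // (leq_trans _ hil).
exists X; split.
- by move=> i l hil; rewrite XE ?(ltnW hil) // -val_eqE gtn_eqF.
- by move=> i; rewrite XE ?eqxx.
move=> i j hji; rewrite mxE.
under eq_bigr do rewrite mxE mulrDl mulr_suml.
rewrite big_split /= exchange_big sum_ord_indicator /=.
under eq_bigr do under eq_bigr do rewrite -mulrA mulrCA.
under eq_bigr do rewrite -mulr_sumr sum_ord_indicator.
have unitAi : Ai i \in unitmx by rewrite unitmxE unitfE; apply: hA.
have -> : \sum_(l' < i) v i 0 l' * A (widen_ord (hri i) l') j = (v i *m Ai i) 0 (Ordinal hji).
  rewrite mxE; apply: eq_bigr => l' _; rewrite [Ai i _ _]mxE.
  by congr (_ * A _ _); apply/val_inj.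
rewrite mulNmx mulmxKV // !mxE (_ : widen_ord _ _ = j) ?addNr //; exact/val_inj.
Qed.

(* If [w] solves [w U_0 = e_0] for the leading block [U_0] of [U], a vanishing
   [w_k] (with [0 < k]) would make the first [k] entries of [w] a nonzero
   solution of [w' H = 0], [H] being the leading [k x k] block of [delcol1 U]. *)
Lemma e0row_solution_neq0 r c (hrc : (r <= c.+1)%N) (U : 'M[F]_(r, c.+1)) (w : 'rV[F]_r) :
  upper_tri U -> w *m colsub (widen_ord hrc) U = e0row F r ->
  (forall k (hr : (k <= r)%N) (hc : (k <= c)%N), (0 < k)%N ->
     \det (ulsub hr hc (delcol1 U)) != 0) ->
  forall k, w 0 k != 0.
Proof.
move=> upU hw hH k.
have wU (j : 'I_c.+1) : (j < r)%N -> \sum_l w 0 l * U l j = ((j : nat) == 0)%:R.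
  move=> hj; have := congr1 (fun v : 'rV_r => v 0 (Ordinal hj)) hw; rewrite !mxE /= => <-.
  by apply: eq_bigr => l _; rewrite mxE; congr (_ * U _ _); apply/val_inj.
have r0 : (0 < r)%N by apply: leq_ltn_trans (ltn_ord k).
have w0 : w 0 (Ordinal r0) != 0.
  have := wU ord0 r0; rewrite (bigD1 (Ordinal r0)) //= big1 ?addr0.
    by apply: contra_eqN => /eqP ->; rewrite mul0r eq_sym oner_eq0.
  move=> l hl; rewrite upU ?mulr0 // lt0n; apply: contra hl => l0.
  by apply/eqP/val_inj; apply/eqP.
have [k0|kpos] := posnP k; first by rewrite (_ : k = Ordinal r0) //; apply/val_inj.
apply/eqP => wk0.
have hkr : (k <= r)%N := ltnW (ltn_ord k).
have hkc : (k <= c)%N by rewrite -ltnS (leq_trans (ltn_ord k) hrc).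
have unitH : ulsub hkr hkc (delcol1 U) \in unitmx by rewrite unitmxE unitfE hH.
pose w' : 'rV_k := \row_l w 0 (widen_ord hkr l).
have : w' *m ulsub hkr hkc (delcol1 U) = 0.
  apply/matrixP => a j; rewrite !mxE.
  have hj : ((lift ord0 (widen_ord hkc j) : nat) < r)%N.
    by rewrite /= /bump leq0n add1n (leq_ltn_trans (ltn_ord j) (ltn_ord k)).
  rewrite -[RHS](wU _ hj) (sum_ord_narrow hkr) => [|l hkl].
    by apply: eq_bigr => l _; rewrite !mxE.
  have [lk|] := eqVneq l k; first by rewrite lk wk0 mul0r.
  rewrite -val_eqE => /negPf lk; rewrite upU ?mulr0 // /= (leq_ltn_trans (ltn_ord j)) //.
  by rewrite ltn_neqAle eq_sym lk.
move=> /(canRL (mulmxK unitH)); rewrite mul0mx => /matrixP/(_ 0 (Ordinal kpos)).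
rewrite !mxE (_ : widen_ord _ _ = Ordinal r0) => [w00|]; last exact/val_inj.
by rewrite w00 eqxx in w0.
Qed.

End LeadingBlocks.

Section ModifiedLU.
Variables (F : fieldType) (r n : nat).
Hypotheses (hnr : (n <= r)%N) (hrn : (r <= n.+1)%N).

Local Notation K := (Kmx F r n.+1).
Local Notation lead U := (colsub (widen_ord hrn) U).

Lemma altrow_lead_Kmx_mul (C : 'M[F]_n.+1) :
  upper_tri C -> first_row_e1 C -> altrow F r *m lead (K *m C) = e0row F r.
Proof.
move=> upC [C00 C0j]; apply/rowP => j; rewrite mulmx_colsub mulmxA !mxE.
rewrite (bigD1 ord0) //= altrow_mulKmx ?(leq_ltn_trans _ (ltn_ord j)) // mul1r.
rewrite big1 ?addr0 => [|l l0]; last first.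
  have [hlj|hjl] := leqP l j; last by rewrite upC ?mulr0.
  by rewrite altrow_mulKmx ?(leq_ltn_trans hlj) // (negPf (l0 : (l : nat) != 0)) mul0r.
have [j0|j0] := eqVneq (j : nat) 0%N; last by rewrite C0j // -val_eqE.
by rewrite (_ : widen_ord _ _ = ord0) ?C00 //; exact/val_inj.
Qed.

(* Solving [K C = U] row by row from [C_0 = e_0] forces the alternating sums
   [c]; the hypothesis on [U] makes them vanish below the diagonal and, when
   [r = n.+1], also gives the last row of [K C = U]. *)
Lemma Kmx_factor (U : 'M[F]_(r, n.+1)) :
  upper_tri U -> altrow F r *m lead U = e0row F r ->
  exists C : 'M[F]_n.+1, [/\ upper_tri C, first_row_e1 C & K *m C = U].
Proof.
move=> upU altU.
have altsum (j : 'I_n.+1) : (j < r)%N ->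
    \sum_(k < r) (-1) ^+ k * U k j = ((j : nat) == 0)%:R.
  move=> hj; have := congr1 (fun v : 'rV_r => v 0 (Ordinal hj)) altU; rewrite !mxE => <-.
  by apply: eq_bigr => k _; rewrite !mxE; congr (_ * U _ _); apply/val_inj.
pose c (i : nat) (j : 'I_n.+1) :=
  (-1) ^+ i * (((j : nat) == 0)%:R - \sum_(k < r | (k < i)%N) (-1) ^+ k * U k j).
have cS (i : 'I_r) j : c i j + c i.+1 j = U i j.
  have sumS : \sum_(k < r | (k < i.+1)%N) (-1) ^+ k * U k j =
      (-1) ^+ i * U i j + \sum_(k < r | (k < i)%N) (-1) ^+ k * U k j.
    rewrite (bigD1 i) //=; congr (_ + _); apply: eq_bigl => k.
    by rewrite ltnS ltn_neqAle -val_eqE andbC.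
  rewrite /c sumS exprS mulN1r mulNr -mulrBr.
  by rewrite (_ : _ - _ = (-1) ^+ i * U i j) ?signrMK //; ring.
have c0 (i : nat) (j : 'I_n.+1) : (j < i)%N -> (j < r)%N -> c i j = 0.
  move=> hji hjr; rewrite /c -(altsum j hjr) (bigID (fun k : 'I_r => (k < i)%N)) /=.
  rewrite [X in _ + X - _]big1 ?addr0 ?subrr ?mulr0 // => k; rewrite -leqNgt => hik.
  by rewrite upU ?mulr0 // (leq_trans hji hik).
exists (\matrix_(i, j) c i j); split.
- move=> i j hji; rewrite mxE c0 //.
  by rewrite (leq_trans hji) // -ltnS (leq_trans (ltn_ord i)) ?ltnS.
- split=> [|j j0]; rewrite mxE /c big_pred0 // subr0 expr0 mul1r //.
  by rewrite (negPf (j0 : (j : nat) != 0)).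
apply/matrixP => i j; rewrite mulKmxE // !mxE inordK ?(leq_trans (ltn_ord i)) //.
case: ltnP => hi; first by rewrite inordK // mul1r cS.
have hji : (j < i.+1)%N := leq_trans (ltn_ord j) hi.
by rewrite mul0r addr0 -(cS i j) (c0 i.+1 j) ?addr0 // (leq_trans hji).
Qed.

Lemma Kmx_mulI (C1 C2 : 'M[F]_n.+1) :
  first_row_e1 C1 -> first_row_e1 C2 -> K *m C1 = K *m C2 -> C1 = C2.
Proof.
move=> [C100 C10j] [C200 C20j] eKC.
suff rows m (j : 'I_n.+1) : (m <= n)%N -> C1 (inord m) j = C2 (inord m) j.
  by apply/matrixP => i j; rewrite -(inord_val i) rows // -ltnS.
elim: m j => [|m IH] j hm.
  rewrite (_ : inord 0 = ord0); last by apply/val_inj; rewrite /= inordK.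
  by have [->|j0] := eqVneq j ord0; [rewrite C100 C200 | rewrite C10j ?C20j].
have hmr : (m < r)%N by rewrite (leq_trans hm).
have := congr1 (fun M : 'M_(r, n.+1) => M (Ordinal hmr) j) eKC.
by rewrite !mulKmxE //= ltnS hm !mul1r IH ?(ltnW hm) // => /addrI.
Qed.

Lemma modified_LU_unique (A : 'M[F]_(r, n.+1)) (B1 B2 : 'M[F]_r) (C1 C2 : 'M[F]_n.+1) :
  \det (ulsub (leqnn r) hrn A) != 0 ->
  lower_tri B1 -> upper_tri C1 -> first_row_e1 C1 -> A = B1 *m K *m C1 ->
  lower_tri B2 -> upper_tri C2 -> first_row_e1 C2 -> A = B2 *m K *m C2 ->
  B2 = B1 /\ C2 = C1.
Proof.
rewrite ulsub_colsub -unitfE -unitmxE => unitA lowB1 upC1 fC1 eA1 lowB2 upC2 fC2 eA2.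
rewrite -mulmxA in eA1; rewrite -mulmxA in eA2.
set U1 := K *m C1 in eA1; set U2 := K *m C2 in eA2.
have /andP[unitB1 unitU1] : (B1 \in unitmx) && (lead U1 \in unitmx).
  by rewrite -unitmx_mul mulmx_colsub -eA1.
have /andP[unitB2 _] : (B2 \in unitmx) && (lead U2 \in unitmx).
  by rewrite -unitmx_mul mulmx_colsub -eA2.
set M := invmx B2 *m B1.
have eM : M *m U1 = U2 by rewrite -mulmxA -eA1 eA2 mulKmx.
have lowM : lower_tri M by apply: lower_tri_mul => //; apply: lower_tri_inv.
have upM : upper_tri M.
  have -> : M = lead U2 *m invmx (lead U1) by rewrite -eM -mulmx_colsub mulmxK.
  have upKC C : upper_tri C -> upper_tri (lead (K *m C)).
    by move=> upC i j hji; rewrite mxE (upper_tri_mul (@Kmx_upper F r n.+1)).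
  by apply: upper_tri_mul; [apply: upKC | apply: upper_tri_inv => //; apply: upKC].
have altM : altrow F r *m M = altrow F r.
  apply: (can_inj (mulmxK unitU1)); rewrite /= -mulmxA mulmx_colsub eM.
  by rewrite !altrow_lead_Kmx_mul.
have Mii i : M i i = 1.
  have := congr1 (fun v : 'rV_r => v 0 i) altM; rewrite [LHS]mxE (bigD1 i) //= big1.
    rewrite /altrow !mxE addr0.
    by move/(congr1 ( *%R ((-1) ^+ i))); rewrite mulrA -expr2 sqrr_sign mul1r.
  move=> k ki; case: (ltngtP k i) => [/lowM->|/upM->|/val_inj ik]; rewrite ?mulr0 //.
  by rewrite ik eqxx in ki.
have M1 : M = 1%:M.
  apply/matrixP => i j; rewrite [RHS]mxE; have [<-|ij] := eqVneq i j; first exact: Mii.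
  case: (ltngtP i j) => [/lowM|/upM|/val_inj ij'] //.
  by rewrite ij' eqxx in ij.
split; first by rewrite -(mulKVmx unitB2 B1) -/M M1 mulmx1.
by apply: (Kmx_mulI fC2 fC1); rewrite -/U1 -/U2 -eM M1 mul1mx.
Qed.

(* [B = (D X)^-1] with [D = diag((-1)^k w_k)]: then [altrow *m D = w], so the
   alternating row sum of [D X A] is [w U_0 = e_0], as [Kmx_factor] requires. *)
Lemma modified_LU_exists (A : 'M[F]_(r, n.+1)) :
  (forall k (hr : (k <= r)%N) (hc : (k <= n.+1)%N), \det (ulsub hr hc A) != 0) ->
  (forall k (hr : (k <= r)%N) (hc : (k <= n)%N), (0 < k)%N ->
     \det (ulsub hr hc (delcol1 A)) != 0) ->
  exists (B : 'M[F]_r) (C : 'M[F]_n.+1),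
    lower_tri B /\ upper_tri C /\ first_row_e1 C /\ A = B *m K *m C.
Proof.
move=> hA hH; have [X [lowX X1 upU]] := unitrig_reduction hrn hA.
set U := X *m A in upU.
have unitX : X \in unitmx.
  by rewrite unitmxE unitfE det_lower_tri // big1 ?oner_eq0 // => i _.
have unitU0 : lead U \in unitmx.
  by rewrite -(ulsub_colsub (leqnn r)) unitmxE unitfE det_ulsub_unitrig_mulmx.
pose w := e0row F r *m invmx (lead U).
have w_neq0 : forall k, w 0 k != 0.
  apply: (e0row_solution_neq0 upU (mulmxKV unitU0 _)) => k hr hc k0.
  by rewrite delcol1_mulmx det_ulsub_unitrig_mulmx ?hH.
pose D := diag_mx (\row_k ((-1) ^+ k * w 0 k)).
have unitD : D \in unitmx.
  rewrite unitmxE unitfE det_diag; apply/prodf_neq0 => k _.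
  by rewrite mxE mulf_neq0 ?signr_eq0.
have lowD : lower_tri D by apply/is_trig_mxP/diag_mx_is_trig.
have upD : upper_tri D by rewrite upper_tri_trmx tr_diag_mx.
have altDU : altrow F r *m lead (D *m U) = e0row F r.
  rewrite -mulmx_colsub mulmxA (_ : altrow F r *m D = w) ?mulmxKV //.
  by apply/rowP => k; rewrite mul_mx_diag !mxE signrMK.
have [C [upC fC KC]] := Kmx_factor (upper_tri_mul upD upU) altDU.
have unitDX : D *m X \in unitmx by rewrite unitmx_mul unitD.
exists (invmx (D *m X)), C; split; first by apply: lower_tri_inv => //; apply: lower_tri_mul.
by do 2!split=> //; rewrite -mulmxA KC /U [D *m (X *m A)]mulmxA mulKmx.
Qed.

Theorem modified_LU (A : 'M[F]_(r, n.+1)) :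
  (forall k (hr : (k <= r)%N) (hc : (k <= n.+1)%N), (0 < k)%N ->
     \det (ulsub hr hc A) != 0) ->
  (forall k (hr : (k <= r)%N) (hc : (k <= n)%N), (0 < k)%N ->
     \det (ulsub hr hc (delcol1 A)) != 0) ->
  exists (B : 'M[F]_r) (C : 'M[F]_n.+1),
    (lower_tri B /\ upper_tri C /\ first_row_e1 C /\ A = B *m K *m C) /\
    forall (B' : 'M[F]_r) (C' : 'M[F]_n.+1),
      lower_tri B' -> upper_tri C' -> first_row_e1 C' -> A = B' *m K *m C' ->
      B' = B /\ C' = C.
Proof.
move=> /leading_minors_neq0 hA hH.
have [B [C [lowB [upC [fC eA]]]]] := modified_LU_exists hA hH.
exists B, C; split=> // B' C'.
exact: modified_LU_unique (hA _ _ _) lowB upC fC eA.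
Qed.

End ModifiedLU.

Theorem theorem7p2 :
  (* (1) m = n.+1, A : m x m *)
  (forall (n : nat) (A : 'M[CC]_(n.+1, n.+1)),
     (forall (k : nat) (hr : (k <= n.+1)%N) (hc : (k <= n.+1)%N),
        (0 < k)%N -> \det (ulsub hr hc A) != 0) ->
     (forall (k : nat) (hr : (k <= n.+1)%N) (hc : (k <= n)%N),
        (0 < k)%N -> \det (ulsub hr hc (delcol1 A)) != 0) ->
     exists (B : 'M[CC]_(n.+1, n.+1)) (C : 'M[CC]_(n.+1, n.+1)),
       (lower_tri B /\ upper_tri C /\ first_row_e1 C /\ A = B *m Kmx _ _ _ *m C) /\
       forall (B' : 'M[CC]_(n.+1, n.+1)) (C' : 'M[CC]_(n.+1, n.+1)),
         lower_tri B' -> upper_tri C' -> first_row_e1 C' ->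
         A = B' *m Kmx _ _ _ *m C' -> B' = B /\ C' = C) /\
  (* (2) m = n.+1, A : (m-1) x m *)
  (forall (n : nat) (A : 'M[CC]_(n, n.+1)),
     (forall (k : nat) (hr : (k <= n)%N) (hc : (k <= n.+1)%N),
        (0 < k)%N -> \det (ulsub hr hc A) != 0) ->
     (forall (k : nat) (hr : (k <= n)%N) (hc : (k <= n)%N),
        (0 < k)%N -> \det (ulsub hr hc (delcol1 A)) != 0) ->
     exists (B : 'M[CC]_(n, n)) (C : 'M[CC]_(n.+1, n.+1)),
       (lower_tri B /\ upper_tri C /\ first_row_e1 C /\ A = B *m Kmx _ _ _ *m C) /\
       forall (B' : 'M[CC]_(n, n)) (C' : 'M[CC]_(n.+1, n.+1)),
         lower_tri B' -> upper_tri C' -> first_row_e1 C' ->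
         A = B' *m Kmx _ _ _ *m C' -> B' = B /\ C' = C).
Proof.
split=> n A.
  exact: modified_LU (leqnSn n) (leqnn n.+1) A.
exact: modified_LU (leqnn n) (leqnSn n) A.
Qed.
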